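(* Let $n,m$ be non-negative integers, not both equal to $0$. Then \[\sum_{d=0}^{\min(n,m)}\frac{(-1)^d}{4^{\lfloor (n+m-2d)/2\rfloor}}\,\frac{n+m-2d}{n+m-d}\binom{n+m-d}{n-d,\,m-d,\,d}\binom{2\lfloor (n+m-2d)/2\rfloor}{\lfloor (n+m-2d)/2\rfloor}=\frac{1}{4^{\lfloor n/2\rfloor+\lfloor m/2\rfloor}}\binom{2\lfloor n/2\rfloor}{\lfloor n/2\rfloor}\binom{2\lfloor m/2\rfloor}{\lfloor m/2\rfloor}.\]
   Context: $\binom{s}{a,\,b,\,c}=\frac{s!}{a!\,b!\,c!}$ denotes the multinomial coefficient (with $a+b+c=s$). *)

From mathcomp Require Import all_boot all_order all_algebra.
Set Implicit Arguments. Unset Strict Implicit. Unset Printing Implicit Defensive.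
Import Order.TTheory GRing.Theory Num.Theory.
Local Open Scope ring_scope.

Definition multinom (a b c : nat) : rat :=
  ((a + b + c)`!)%:R / ((a`! * b`! * c`!)%N)%:R.

From mathcomp Require Import all_boot all_order all_algebra.
From mathcomp Require Import zify ring.
Import Order.TTheory GRing.Theory Num.Theory.
Local Open Scope ring_scope.

(* Let Q(N) = C(2⌊N/2⌋, ⌊N/2⌋) / 4^⌊N/2⌋, i.e. [cbin N].  Since
   (2a+2) Q(2a+2) = (2a+1) Q(2a) and Q(2a+1) = Q(2a), Q satisfies
   (N+2) Q(N+2) - N Q(N) = Q(N+1) with Q(0) = Q(1) = 1.
   The left-hand side S(n,m) = Σ_d c(n,m,d) Q(n+m-2d) ([csum n m], with
   c(n,m,d) = [scoef n m d]) obeys the same recurrence in n: the coefficients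
   satisfy
   (n+2) c(n+2,m,d+1) - n c(n,m,d) = (n+m-2d) (c(n+1,m,d+1) - c(n+1,m,d)),
   and after the shift d ↦ d+1 the weights (n+m-2d) Q(n+m-2d) recombine through
   the recurrence of Q.  As S(0,m) = S(1,m) = Q(m), induction on n gives
   S(n,m) = Q(n) Q(m). *)

Lemma mul_central_binS a :
  (a.+1 * 'C((a.+1).*2, a.+1) = 2 * (a.*2).+1 * 'C(a.*2, a))%N.
Proof.
have step2 := mul_bin_diag (a.*2.+2) a.
have step1 := mul_bin_diag (a.*2.+1) a.
have sym : 'C(a.*2.+1, a.+1) = 'C(a.*2.+1, a).
  by rewrite -[RHS]bin_sub; [congr 'C(_, _) | ]; lia.
rewrite sym in step1; rewrite -step2 -mulnA step1 mulnA; congr (_ * _)%N; lia.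
Qed.

Lemma natr_fact_neq0 (R : numDomainType) n : n`!%:R != 0 :> R.
Proof. by rewrite pnatr_eq0 -lt0n fact_gt0. Qed.

Ltac natr_neq0 := rewrite ?natr_fact_neq0 ?(addrC 1) ?natr1 -?natrD ?pnatr_eq0.

Section Recurrence.
Variable R : numFieldType.

Definition cbin (N : nat) : R := 'C(2 * N./2, N./2)%:R / 4 ^+ N./2.

Lemma cbin_double_succ a : a.*2.+2%:R * cbin a.*2.+2 = a.*2.+1%:R * cbin a.*2.
Proof.
have central : 'C((a.+1).*2, a.+1)%:R = 2 * a.*2.+1%:R * 'C(a.*2, a)%:R / a.+1%:R :> R.
  by rewrite -[2]/(2%:R) -!natrM -mul_central_binS natrM mulrC mulKf // pnatr_eq0.
rewrite /cbin -doubleS !doubleK !mul2n central exprS -!muln2 -addn1 !(natrD, natrM).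
by field; rewrite expf_neq0; natr_neq0.
Qed.

Lemma cbin_odd a : cbin a.*2.+1 = cbin a.*2.
Proof. by rewrite /cbin /= uphalf_double doubleK. Qed.

Lemma cbin0 : cbin 0 = 1.
Proof. by rewrite /cbin bin0 expr0 divr1. Qed.

Lemma cbin_rec M : M.+2%:R * cbin M.+2 - M%:R * cbin M = cbin M.+1.
Proof.
rewrite -[M]odd_double_half; case: (odd M); rewrite ?add0n ?add1n; set a := M./2.
- have -> : cbin a.*2.+3 = cbin a.*2.+2 by rewrite -doubleS cbin_odd.
  rewrite cbin_odd -cbin_double_succ -[a.*2.+3]addn1 natrD; ring.
- rewrite cbin_double_succ cbin_odd -[a.*2.+1]addn1 natrD; ring.
Qed.

(* (-1)^d (k+l)/(k+l+d) times the multinomial coefficient of (k, l, d), written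
   with (k+l+d-1)! so that only factorials occur as denominators. *)
Definition tcoef (k l d : nat) : R :=
  (-1) ^+ d * (k + l)%:R * ((k + l + d).-1)`!%:R / (k`! * l`! * d`!)%:R.

Lemma tcoef_rec k l d :
  (k + d).+2%:R * tcoef k.+1 l d.+1 - (k + d)%:R * tcoef k l.+1 d
  = (k + l).+1%:R * (tcoef k l d.+1 - tcoef k.+1 l.+1 d).
Proof.
rewrite /tcoef !addSn !addnS /= !factS exprS -!natr1 !(natrM, natrD).
by field; natr_neq0.
Qed.

Lemma tcoef_rec_k0 l d : d.+1%:R * tcoef 0 l d.+1 = - (l%:R * tcoef 0 l.+1 d).
Proof.
rewrite /tcoef !add0n !addnS /= !factS exprS -!natr1 !(natrM, natrD).
by field; natr_neq0.
Qed.

Lemma tcoef_rec_l0 k d : (k + d)%:R * tcoef k 0 d = k%:R * tcoef k.+1 0 d.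
Proof.
case: k => [|k]; first by rewrite /tcoef addn0 mulr0n !(mulr0, mul0r).
rewrite /tcoef !addn0 !addSn /= !factS -!natr1 !(natrM, natrD).
by field; natr_neq0.
Qed.

Lemma tcoef_rec_d0 k l : (k.+2)%:R * tcoef k.+2 l 0 = (k + l).+2%:R * tcoef k.+1 l 0.
Proof.
rewrite /tcoef !addn0 !addSn /= !factS -!natr1 !(natrM, natrD).
by field; natr_neq0.
Qed.

Lemma tcoef00 d : tcoef 0 0 d = 0.
Proof. by rewrite /tcoef mulr0n !(mulr0, mul0r). Qed.

Lemma tcoef_bin k l : (0 < k + l)%N -> tcoef k l 0 = 'C(k + l, k)%:R.
Proof.
move=> pos; have [s sE] : exists s, (k + l = s.+1)%N by exists (k + l).-1; lia.
have binE := bin_fact (leq_addr l k); rewrite addKn sE factS in binE.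
rewrite /tcoef addn0 sE /= fact0 muln1 expr0 mul1r -natrM -binE !natrM.
by field; natr_neq0.
Qed.

Lemma tcoef0l1 l : tcoef 0 l 1 = - l%:R.
Proof. by rewrite /tcoef add0n addn1 /= expr1 fact0 mul1n muln1; field; natr_neq0. Qed.

Definition scoef (n m d : nat) : R :=
  if ((d <= n) && (d <= m))%N then tcoef (n - d) (m - d) d else 0.

Lemma scoefE n m d k l : n = (k + d)%N -> m = (l + d)%N -> scoef n m d = tcoef k l d.
Proof. by move=> -> ->; rewrite /scoef !leq_addl !addnK. Qed.

Lemma scoef_out n m d : ((n < d) || (m < d))%N -> scoef n m d = 0.
Proof. by move=> out; rewrite /scoef ifF //; apply/negbTE; lia. Qed.

Lemma scoef_eq0 n m d : (n + m <= 2 * d)%N -> scoef n m d = 0.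
Proof.
move=> small; have [inside | outside] := boolP ((d <= n) && (d <= m))%N.
  by rewrite (@scoefE n m d 0 0) ?tcoef00 //; lia.
by apply: scoef_out; lia.
Qed.

Lemma scoef_rec n m d :
  n.+2%:R * scoef n.+2 m d.+1 - n%:R * scoef n m d
  = (n + m - 2 * d)%:R * (scoef n.+1 m d.+1 - scoef n.+1 m d).
Proof.
have [out | ] := boolP ((n.+1 < d) || (m < d))%N.
  by rewrite ![scoef _ _ _]scoef_out ?(mulr0, subrr) //; lia.
rewrite negb_or -!leqNgt => /andP [dn dm].
case: (ltnP d n.+1) => [d_le_n | n_lt_d].
  have [k ->] : exists k, n = (k + d)%N by exists (n - d)%N; lia.
  case: (ltnP d m) => [d_lt_m | m_le_d].
    have [l ->] : exists l, m = (l.+1 + d)%N by exists (m - d.+1)%N; lia.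
    rewrite (@scoefE _ _ _ k.+1 l) 1?(@scoefE _ _ d k l.+1) 1?(@scoefE _ _ d.+1 k l)
      1?(@scoefE _ _ d k.+1 l.+1); try lia.
    have -> : (k + d + (l.+1 + d) - 2 * d = (k + l).+1)%N by lia.
    by rewrite -tcoef_rec; congr (_%:R * _ - _); lia.
  have -> : m = d by lia.
  rewrite (@scoef_out _ _ d.+1) 1?(@scoef_out _ _ d.+1) 1?(@scoefE (k + d) d d k 0)
    1?(@scoefE (k + d).+1 d d k.+1 0); try lia.
  have -> : (k + d + d - 2 * d = k)%N by lia.
  by rewrite !(mulr0, sub0r) mulrN tcoef_rec_l0.
have -> : d = n.+1 by lia.
rewrite (@scoef_out n) 1?(@scoef_out n.+1 m n.+2); try lia.
case: (ltnP m n.+2) => [m_lt | m_ge].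
  have -> : (n + m - 2 * n.+1 = 0)%N by lia.
  by rewrite mul0r scoef_out ?(mulr0, subr0) //; lia.
have [l ->] : exists l, m = (l + n.+2)%N by exists (m - n.+2)%N; lia.
rewrite (@scoefE _ _ _ 0 l) 1?(@scoefE _ _ _ 0 l.+1); try lia.
have -> : (n + (l + n.+2) - 2 * n.+1 = l)%N by lia.
by rewrite tcoef_rec_k0 mulr0 subr0 sub0r mulrN.
Qed.

Lemma sum_scoef_widen n m B (G : nat -> R) : (minn n m < B)%N ->
  \sum_(0 <= d < B) scoef n m d * G d
  = \sum_(0 <= d < (minn n m).+1) scoef n m d * G d.
Proof.
move=> min_lt_B; rewrite (big_cat_nat _ (n := (minn n m).+1)) //=.
rewrite [X in _ + X]big1_seq ?addr0 // => d /andP[_]; rewrite mem_index_iota => d_gt.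
by rewrite scoef_out ?mul0r //; lia.
Qed.

Lemma scoef_cbin_rec n m d :
  scoef n.+1 m d * ((n + m + 2 - 2 * d)%:R * cbin (n + m + 2 - 2 * d)
                   - (n + m - 2 * d)%:R * cbin (n + m - 2 * d))
  = scoef n.+1 m d * cbin (n.+1 + m - 2 * d).
Proof.
have [small | large] := leqP (n.+1 + m) (2 * d).
  by rewrite scoef_eq0 ?mul0r.
have -> : (n + m + 2 - 2 * d = (n + m - 2 * d).+2)%N by lia.
have -> : (n.+1 + m - 2 * d = (n + m - 2 * d).+1)%N by lia.
by rewrite cbin_rec.
Qed.

Definition csum n m : R :=
  \sum_(0 <= d < (minn n m).+1) scoef n m d * cbin (n + m - 2 * d).

Lemma csum_rec n m :
  n.+2%:R * csum n.+2 m - n%:R * csum n m = csum n.+1 m.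
Proof.
pose w M : R := M%:R * cbin M.
rewrite /csum -!(@sum_scoef_widen _ _ n.+3); try lia.
have lead : n.+2%:R * (scoef n.+2 m 0 * cbin (n.+2 + m - 2 * 0))
            = scoef n.+1 m 0 * w (n + m + 2 - 2 * 0)%N.
  rewrite /w (@scoefE _ _ _ n.+2 m) 1?(@scoefE _ _ _ n.+1 m); try lia.
  have -> : (n.+2 + m - 2 * 0 = (n + m).+2)%N by lia.
  have -> : (n + m + 2 - 2 * 0 = (n + m).+2)%N by lia.
  by rewrite mulrA tcoef_rec_d0; ring.
have step d : n.+2%:R * (scoef n.+2 m d.+1 * cbin (n.+2 + m - 2 * d.+1))
              - n%:R * (scoef n m d * cbin (n + m - 2 * d))
            = scoef n.+1 m d.+1 * w (n + m + 2 - 2 * d.+1)%N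
              - scoef n.+1 m d * w (n + m - 2 * d)%N.
  have -> : (n.+2 + m - 2 * d.+1 = n + m - 2 * d)%N by lia.
  have -> : (n + m + 2 - 2 * d.+1 = n + m - 2 * d)%N by lia.
  by rewrite /w (mulrA n.+2%:R) (mulrA n%:R) -mulrBl scoef_rec; ring.
have pad_last : \sum_(0 <= d < n.+2) scoef n.+1 m d * w (n + m - 2 * d)%N
             = \sum_(0 <= d < n.+3) scoef n.+1 m d * w (n + m - 2 * d)%N.
  by rewrite [RHS]big_nat_recr //= [scoef n.+1 m n.+2]scoef_out ?mul0r ?addr0 //; lia.
rewrite big_nat_recl // [X in _ - _ * X]big_nat_recr //= [scoef n m n.+2]scoef_out; last lia.
rewrite mul0r addr0 mulrDr !mulr_sumr lead -addrA -sumrB (eq_bigr _ (fun d _ => step d)).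
rewrite sumrB addrA -(big_nat_recl _ _ (fun d => scoef n.+1 m d * w (n + m + 2 - 2 * d)%N)) //.
rewrite pad_last -sumrB.
by apply: eq_bigr => d _; rewrite -mulrBr scoef_cbin_rec.
Qed.

Lemma csum0 m : (0 < m)%N -> csum 0 m = cbin m.
Proof.
move=> m_gt0; rewrite /csum min0n big_nat1 (@scoefE _ _ _ 0 m) ?addn0 //.
by rewrite tcoef_bin // bin0 mul1r add0n muln0 subn0.
Qed.

Lemma csum1 m : csum 1 m = cbin m.
Proof.
rewrite /csum; case: m => [|l].
  by rewrite minn0 big_nat1 (@scoefE _ _ _ 1 0) // tcoef_bin // bin1 mul1r (cbin_odd 0).
rewrite minnSS min0n big_nat_recr // big_nat1 (@scoefE _ _ _ 1 l.+1) ?addn0 //.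
rewrite (@scoefE _ _ _ 0 l) ?addn1 // tcoef_bin // tcoef0l1 bin1 -(cbin_rec l) /=.
have -> : (1 + l.+1 - 2 * 0 = l.+2)%N by lia.
have -> : (1 + l.+1 - 2 * 1 = l)%N by lia.
by rewrite add1n mulNr.
Qed.

Lemma csumE n m : (0 < n + m)%N -> csum n m = cbin n * cbin m.
Proof.
elim/ltn_ind: n m => -[_ m m_gt0 | [_ m _ | n IH m _]].
- by rewrite csum0 // cbin0 mul1r.
- by rewrite csum1 (cbin_odd 0) cbin0 mul1r.
have n2_neq0 : n.+2%:R != 0 :> R by rewrite pnatr_eq0.
(* csum 0 0 = 0 differs from cbin 0 ^+ 2, but it only occurs with the factor n = 0. *)
have lower : n%:R * csum n m = n%:R * (cbin n * cbin m).
  by case: n IH {n2_neq0} => [|n] IH; rewrite ?mul0r // IH.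
apply: (mulfI n2_neq0); rewrite -[LHS](subrK (n%:R * csum n m)).
by rewrite csum_rec IH // lower -cbin_rec; ring.
Qed.

End Recurrence.

Lemma summand_eq n m d : (d <= n)%N -> (d <= m)%N -> (0 < n + m)%N ->
  (-1) ^+ d / (4 ^+ ((n + m - 2 * d)./2)%N : rat)
    * (((n + m - 2 * d)%N)%:R / ((n + m - d)%N)%:R)
    * multinom (n - d) (m - d) d
    * ('C(2 * (n + m - 2 * d)./2, (n + m - 2 * d)./2))%:R
  = scoef rat n m d * cbin rat (n + m - 2 * d).
Proof.
move=> dn dm pos; rewrite (@scoefE _ _ _ _ (n - d) (m - d)) ?subnK // /cbin /tcoef /multinom.
have -> : (n + m - 2 * d = (n - d) + (m - d))%N by lia.
have -> : (n + m - d = (n - d) + (m - d) + d)%N by lia.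
have [s ->] : exists s, ((n - d) + (m - d) + d = s.+1)%N by exists (n + m - d).-1; lia.
rewrite factS /=.
by field; rewrite ?expf_neq0; natr_neq0.
Qed.

Theorem corollary4p1 (n m : nat) (Hnm : (0 < n + m)%N) :
  \sum_(0 <= d < (minn n m).+1)
     ((-1) ^+ d / (4 ^+ ((n + m - 2 * d)./2)%N : rat)
      * (((n + m - 2 * d)%N)%:R / ((n + m - d)%N)%:R)
      * multinom (n - d) (m - d) d
      * ('C(2 * (n + m - 2 * d)./2, (n + m - 2 * d)./2))%:R)
  = 1 / (4 ^+ (n./2 + m./2)%N : rat)
      * ('C(2 * n./2, n./2))%:R * ('C(2 * m./2, m./2))%:R.
Proof.
transitivity (csum rat n m).
  by apply: eq_big_nat => d /andP[_ d_le]; apply: summand_eq => //; lia.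
by rewrite csumE // /cbin exprD; field; rewrite !expf_neq0.
Qed.
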